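(* Let $M$ be a $3$-connected simple matroid with a $3$-connected simple minor $N$. Suppose that $x$ and $p$ are elements of $M$ such that $\{x,p\}$ is vertically $N$-contractible in $M$ but $p$ is not vertically $N$-contractible in $M$. Then $r(M)\ge 4$ and there is an $(M,N)$-vertbarrier $(C^*,p)$ with $x\in C^*$.
   Context: An element $p$ (or a set $X$) is vertically $N$-contractible in $M$ if $\mathrm{si}(M/p)$ (resp. $\mathrm{si}(M/X)$), the simplification, is a $3$-connected matroid with an $N$-minor. An $(M,N)$-vertbarrier is a pair $(C^*,p)$ where $C^*$ is a cocircuit of $M$ of rank $3$, $p\in\mathrm{cl}_M(C^* )-C^*$, and $\mathrm{si}(M/\{x,p\})$ is $3$-connected with an $N$-minor for some $x\in C^*$. *)

From mathcomp Require Import all_boot.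
Set Implicit Arguments. Unset Strict Implicit. Unset Printing Implicit Defensive.

(* Minors etc. are defined as data
   (their matroid axioms are consequences, not needed for definitions). *)
Record matroid (E : finType) := Matroid {
  ground : {set E};
  indep : {set E} -> bool }.

Section Matroids.
Variable E : finType.
Implicit Types (M : matroid E) (A B C D S I J X : {set E}) (e f : E).

Definition is_matroid M : Prop :=
  [/\ indep M set0,
      (forall I, indep M I -> I \subset ground M),
      (forall I J, J \subset I -> indep M I -> indep M J) &
      (forall I J, indep M I -> indep M J -> #|I| < #|J| ->
         exists2 e, e \in J :\: I & indep M (e |: I))].

Definition rk M A : nat := \max_(B : {set E} | (B \subset A) && indep M B) #|B|.

Definition rank M : nat := rk M (ground M).

Definition cl M X : {set E} := [set e in ground M | rk M (e |: X) == rk M X].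

Definition contract M X : matroid E :=
  Matroid (ground M :\: X)
    (fun I => (I \subset ground M :\: X) && (rk M (I :|: X) == #|I| + rk M X)).

Definition restrict M S : matroid E :=
  Matroid S (fun I => (I \subset S) && indep M I).

Definition delete M D : matroid E := restrict M (ground M :\: D).

Definition dual M : matroid E :=
  Matroid (ground M)
    (fun I => (I \subset ground M) && (rk M (ground M :\: I) == rk M (ground M))).

Definition circuit M C : Prop :=
  [/\ C \subset ground M, ~~ indep M C &
      forall D, D \proper C -> indep M D].

Definition cocircuit M C : Prop := circuit (dual M) C.

Definition loop M e : Prop := e \in ground M /\ ~~ indep M [set e].

Definition parallel M e f : Prop :=
  [/\ e \in ground M, f \in ground M, e != f &
      [/\ indep M [set e], indep M [set f] & ~~ indep M [set e; f]]].

Definition simple M : Prop :=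
  (forall e, ~ loop M e) /\ (forall e f, ~ parallel M e f).

Definition k_separation M k X : Prop :=
  [/\ X \subset ground M, k <= #|X|, k <= #|ground M :\: X| &
      rk M X + rk M (ground M :\: X) < rank M + k].

Definition three_connected M : Prop :=
  forall k X, k < 3 -> ~ k_separation M k X.

(* S is the ground set of a simplification of M: a set of representatives,
   one from each parallel class of non-loop elements *)
Definition simplification_set M S : Prop :=
  [/\ S \subset ground M,
      (forall e, e \in S -> ~ loop M e),
      (forall e f, e \in S -> f \in S -> ~ parallel M e f) &
      (forall e, e \in ground M -> ~ loop M e ->
         e \in S \/ exists2 f, f \in S & parallel M e f)].

Definition si M S : matroid E := restrict M S.

End Matroids.

Definition iso_matroid (E E' : finType) (M : matroid E) (N : matroid E') : Prop :=
  exists f : E -> E',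
    [/\ {in ground M &, injective f},
        f @: ground M = ground N &
        forall I : {set E}, I \subset ground M -> indep M I = indep N (f @: I)].

Definition has_minor (E E' : finType) (M : matroid E) (N : matroid E') : Prop :=
  exists C D : {set E},
    [/\ C \subset ground M, D \subset ground M, [disjoint C & D] &
        iso_matroid (delete (contract M C) D) N].

Definition vert_N_contractible (E E' : finType) (M : matroid E) (N : matroid E')
    (X : {set E}) : Prop :=
  exists S : {set E},
    [/\ simplification_set (contract M X) S,
        three_connected (si (contract M X) S) &
        has_minor (si (contract M X) S) N].

Definition vertbarrier (E E' : finType) (M : matroid E) (N : matroid E')
    (Cs : {set E}) (p : E) : Prop :=
  [/\ cocircuit M Cs, rk M Cs = 3, p \in cl M Cs :\: Cs &
      exists2 x, x \in Cs & vert_N_contractible M N [set x; p]].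

(* Choosing the representatives of si(M/p) to contain x and those of si(M/{x,p}),
   the N-minor of si(M/{x,p}) becomes one of si(M/p), which therefore has a
   k-separation (X, Y), k <= 2, with x in Y.  In M this makes the closure W of
   X + p a flat with r(W) + r((E - W) + {x,p}) <= r(M) + k, and 3-connectivity
   of M forces k = 2 and r(W) >= 3.  Applying the 3-connectivity of si(M/{x,p})
   to the flats W and cl(W + x) shows that x is not in W and that W is a
   hyperplane; its complement is the required rank-3 cocircuit, spanning p. *)

From mathcomp Require Import all_boot zify.
From Stdlib Require Import Classical.
Set Implicit Arguments. Unset Strict Implicit. Unset Printing Implicit Defensive.

Section RankFunction.
Variables (E : finType) (M : matroid E).
Hypothesis hM : is_matroid M.
Local Notation r := (rk M).
Local Notation G := (ground M).
Implicit Types (A B I J T : {set E}) (e : E).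

Lemma indep0 : indep M set0. Proof. by case: hM. Qed.

Lemma indepS I J : J \subset I -> indep M I -> indep M J.
Proof. by case: hM => _ _ h _; apply: h. Qed.

Lemma indep_augment I J : indep M I -> indep M J -> #|I| < #|J| ->
  exists2 e, e \in J :\: I & indep M (e |: I).
Proof. by case: hM => _ _ _ h; apply: h. Qed.

Lemma card_le_rk A I : I \subset A -> indep M I -> #|I| <= r A.
Proof.
by move=> sIA iI; apply: (leq_bigmax_cond (P := fun B => (B \subset A) && indep M B)); rewrite sIA.
Qed.

Lemma rk_le_card A : r A <= #|A|.
Proof. by apply/bigmax_leqP => B /andP [sBA _]; apply: subset_leq_card. Qed.

Lemma rk_basis A : exists2 B : {set E}, (B \subset A) && indep M B & #|B| = r A.
Proof.
have P0 : (set0 \subset A) && indep M set0 by rewrite sub0set indep0.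
rewrite /rk (bigmax_eq_arg set0 P0); case: arg_maxnP => // B PB _; by exists B.
Qed.

Lemma rk_mono A B : A \subset B -> r A <= r B.
Proof.
move=> sAB; apply/bigmax_leqP => I /andP [sIA iI].
by apply: card_le_rk => //; apply: subset_trans sAB.
Qed.

Lemma indep_rkE I : indep M I = (r I == #|I|).
Proof.
apply/idP/eqP => [iI | rI]; first by apply/eqP; rewrite eqn_leq rk_le_card card_le_rk.
have [B /andP [sBI iB] cB] := rk_basis I.
suff -> : I = B by [].
by apply/eqP; rewrite eq_sym eqEcard sBI cB rI /=.
Qed.

Lemma basis_extend A I : I \subset A -> indep M I ->
  exists2 K : {set E}, [&& I \subset K, K \subset A & indep M K] & #|K| = r A.
Proof.
move=> sIA iI; move: {2}(r A - #|I|) (erefl (r A - #|I|)) => n.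
have := card_le_rk sIA iI.
elim: n I sIA iI => [|n IH] I sIA iI cI hn.
  by exists I; [rewrite subxx sIA iI | lia].
have [B /andP [sBA iB] cB] := rk_basis A.
have [|e /setDP [eB eI] ieI] := indep_augment iI iB; first lia.
have seIA : e |: I \subset A by rewrite subUset sub1set (subsetP sBA).
have [||K /and3P [sK sKA iK] cK] := IH (e |: I) seIA ieI.
- exact: card_le_rk.
- by rewrite cardsU1 eI; lia.
by exists K; rewrite // sKA iK (subset_trans (subsetUr _ _) sK).
Qed.

Lemma rk_submod A B : r (A :|: B) + r (A :&: B) <= r A + r B.
Proof.
have [J /andP [sJ iJ] cJ] := rk_basis (A :&: B).
have [|K /and3P [sJK sKU iK] cK] := basis_extend (A := A :|: B) _ iJ.
  exact: subset_trans sJ (subset_trans (subsetIl _ _) (subsetUl _ _)).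
have cKA : #|K :&: A| <= r A by apply: card_le_rk (subsetIr _ _) (indepS (subsetIl _ _) iK).
have cKB : #|K :&: B| <= r B by apply: card_le_rk (subsetIr _ _) (indepS (subsetIl _ _) iK).
have cJ' : #|J| <= #|K :&: A :&: (K :&: B)|.
  by apply: subset_leq_card; rewrite setIACA setIid subsetI sJK.
have KAB : K :&: A :|: K :&: B = K by rewrite -setIUr; apply/setIidPl.
have := cardsUI (K :&: A) (K :&: B); rewrite KAB; lia.
Qed.

Lemma rk_le_setU1 A e : r A <= r (e |: A).
Proof. by apply: rk_mono; apply: subsetUr. Qed.

Lemma rk_setU_le A B : r (A :|: B) <= r A + r B.
Proof. by have := rk_submod A B; lia. Qed.

Lemma rk_setU_card A B : r (A :|: B) <= #|A| + r B.
Proof. by have := rk_setU_le A B; have := rk_le_card A; lia. Qed.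

Lemma rk_setU1 A e : r (e |: A) <= (r A).+1.
Proof.
have := rk_submod [set e] A; have := rk_le_card [set e]; rewrite cards1; lia.
Qed.

Lemma rk_span A T : (forall e, e \in T -> r (e |: A) = r A) -> r (A :|: T) = r A.
Proof.
move=> hT; apply/eqP; rewrite eqn_leq [_ <= r (A :|: T)]rk_mono ?subsetUl // andbT leqNgt; apply/negP => lt.
have [B /andP [sBA iB] cB] := rk_basis A.
have [|K /and3P [sBK sK iK] cK] := basis_extend (A := A :|: T) _ iB.
  exact: subset_trans sBA (subsetUl _ _).
have [e /setDP [eK eA]] : exists e, e \in K :\: A.
  apply/set0Pn; rewrite setD_eq0; apply/negP => sKA.
  by have := card_le_rk sKA iK; lia.
have eT : e \in T by have := subsetP sK e eK; rewrite in_setU (negbTE eA).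
have eB : e \notin B by apply: contra eA; apply: (subsetP sBA).
have ieB : indep M (e |: B) by apply: indepS iK; rewrite subUset sub1set eK sBK.
have := card_le_rk (setUS [set e] sBA) ieB; rewrite cardsU1 eB cB hT //; lia.
Qed.

End RankFunction.

Lemma rk_restrict (E : finType) (M : matroid E) S A :
  rk (restrict M S) A = rk M (A :&: S).
Proof. by apply: eq_bigl => B; rewrite /= subsetI andbA. Qed.

Section Closure.
Variables (E : finType) (M : matroid E).
Hypothesis hM : is_matroid M.
Local Notation r := (rk M).
Local Notation G := (ground M).
Implicit Types (A B F : {set E}) (e : E).

Lemma in_clE A e : (e \in cl M A) = (e \in G) && (r (e |: A) == r A).
Proof. by rewrite inE. Qed.

Lemma cl_subset_ground A : cl M A \subset G.
Proof. by apply/subsetP => e; rewrite in_clE => /andP []. Qed.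

Lemma subset_cl A : A \subset G -> A \subset cl M A.
Proof.
by move=> sAG; apply/subsetP => e eA; rewrite in_clE (subsetP sAG) //= (setUidPr _) ?sub1set.
Qed.

Lemma rk_setU1_mono A B e : A \subset B -> r (e |: A) = r A -> r (e |: B) = r B.
Proof.
move=> sAB eA; apply/eqP; rewrite eqn_leq rk_le_setU1 // andbT.
have := rk_submod hM (e |: A) B.
have -> : e |: A :|: B = e |: B by rewrite -setUA (setUidPr sAB).
have : r A <= r ((e |: A) :&: B) by apply: rk_mono => //; rewrite subsetI subsetUr sAB.
lia.
Qed.

Lemma cl_mono A B : A \subset B -> cl M A \subset cl M B.
Proof.
move=> sAB; apply/subsetP => e; rewrite !in_clE => /andP [-> /eqP eA].
by rewrite (rk_setU1_mono sAB eA) eqxx.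
Qed.

Lemma rk_setU_cl A B : B \subset cl M A -> r (A :|: B) = r A.
Proof. by move=> sB; apply: (rk_span hM) => e /(subsetP sB); rewrite in_clE => /andP [_ /eqP]. Qed.

Lemma rk_cl A : A \subset G -> r (cl M A) = r A.
Proof.
move=> sAG; apply/eqP; rewrite eqn_leq [r A <= _]rk_mono ?subset_cl // andbT.
by rewrite -[X in _ <= X](rk_setU_cl (subxx (cl M A))) rk_mono ?subsetUr.
Qed.

Definition flat F := cl M F = F.

Lemma flat_ground F : flat F -> F \subset G.
Proof. by move <-; apply: cl_subset_ground. Qed.

Lemma flatT : flat G.
Proof. by apply/eqP; rewrite eqEsubset cl_subset_ground subset_cl. Qed.

Lemma flat_cl A : A \subset G -> flat (cl M A).
Proof.
move=> sAG; apply/eqP; rewrite eqEsubset subset_cl ?cl_subset_ground // andbT.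
apply/subsetP => e; rewrite !in_clE rk_cl // => /andP [-> /eqP eclA] /=.
rewrite eqn_leq rk_le_setU1 // andbT -eclA.
by apply: rk_mono; apply: setUS; apply: subset_cl.
Qed.

Lemma cl_subset_flat F A : flat F -> A \subset F -> cl M A \subset F.
Proof. by move=> fF sAF; rewrite -fF; apply: cl_mono. Qed.

Lemma rk_notin_flat F e : flat F -> e \in G -> e \notin F -> r (e |: F) = (r F).+1.
Proof.
move=> fF eG eF; have := rk_setU1 hM F e; have := rk_le_setU1 M F e.
suff : r (e |: F) != r F by lia.
by apply: contra eF => eeF; rewrite -fF in_clE eG.
Qed.

Lemma flat_full F A : flat F -> A \subset F -> r ((G :\: F) :|: A) <= r A -> G \subset F.
Proof.
move=> fF sAF le; apply/subsetP => e eG; apply/negPn/negP => eF.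
have : e \in cl M A.
  rewrite in_clE eG eqn_leq rk_le_setU1 andbT (leq_trans _ le) //.
  by apply: rk_mono; apply: setSU; rewrite sub1set inE eF eG.
by move/(subsetP (cl_subset_flat fF sAF)); rewrite (negbTE eF).
Qed.

End Closure.

Lemma cocircuit_setD_hyperplane (E : finType) (M : matroid E) (W : {set E}) :
  is_matroid M -> flat M W -> rk M (ground M) = (rk M W).+1 -> cocircuit M (ground M :\: W).
Proof.
move=> hM fW rW; have sWG := flat_ground fW.
have eW : ground M :\: (ground M :\: W) = W by rewrite setDDr setDv set0U; apply/setIidPr.
split=> /=; first exact: subsetDl.
  by rewrite subsetDl eW rW eqn_leq ltnn andbF.
move=> D ltD; have sD := proper_sub ltD; rewrite (subset_trans sD) ?subsetDl //=.
have [_ [e eW' eD]] := properP ltD; have /setDP [eG eW''] := eW'.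
have seWD : e |: W \subset ground M :\: D.
  rewrite subUset sub1set inE eD eG /=; apply/subsetP => y yW; rewrite inE (subsetP sWG) // andbT.
  by apply: contraL yW => /(subsetP sD); rewrite inE => /andP [].
have := rk_mono M seWD; rewrite (rk_notin_flat hM fW eG eW'') -rW.
by have := rk_mono M (subsetDl (ground M) D); move=> *; apply/eqP; lia.
Qed.

Section Contraction.
Variables (E : finType) (M : matroid E).
Hypothesis hM : is_matroid M.
Local Notation r := (rk M).
Local Notation G := (ground M).
Implicit Types (A S X Z : {set E}) (e f : E).

Lemma rk_contract X A : rk (contract M X) A + r X = r ((A :&: (G :\: X)) :|: X).
Proof.
set A' := A :&: (G :\: X).
apply/eqP; rewrite eqn_leq; apply/andP; split.
  suff : rk (contract M X) A <= r (A' :|: X) - r X.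
    have : r X <= r (A' :|: X) by apply: rk_mono; apply: subsetUr.
    lia.
  apply/bigmax_leqP => B /andP [sBA] /= /andP [sB /eqP cB].
  have : r (B :|: X) <= r (A' :|: X) by apply: rk_mono; apply: setSU; rewrite subsetI sBA.
  lia.
have [J /andP [sJX iJ] cJ] := rk_basis hM X.
have [|K /and3P [sJK sK iK] cK] := basis_extend hM (A := A' :|: X) _ iJ.
  exact: subset_trans sJX (subsetUr _ _).
have KX : K :&: X = J.
  apply/eqP; rewrite eq_sym eqEcard subsetI sJK sJX /= cJ.
  by apply: card_le_rk (subsetIr _ _) (indepS hM (subsetIl _ _) iK).
set B := K :\: X.
have sBA' : B \subset A'.
  apply/subsetP => y /setDP [yK yX]; have := subsetP sK y yK.
  by rewrite in_setU (negbTE yX) orbF.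
have cBK : #|B| + #|J| = #|K| by rewrite -KX addnC cardsID.
have rBX : r (B :|: X) = #|K|.
  apply/eqP; rewrite eqn_leq; apply/andP; split.
    by rewrite cK; apply: rk_mono; apply: setSU.
  apply: card_le_rk iK; apply/subsetP => y yK; rewrite in_setU in_setD yK andbT.
  by case: (y \in X).
have iB : indep (contract M X) B.
  by rewrite /= (subset_trans sBA') ?subsetIr //= rBX -cJ cBK.
have := card_le_rk (M := contract M X) (subset_trans sBA' (subsetIl _ _)) iB.
rewrite -cJ -cK; lia.
Qed.

Lemma rk_si_contract X S Z : S \subset G :\: X -> Z \subset S ->
  rk (si (contract M X) S) Z + r X = r (Z :|: X).
Proof.
move=> sS sZ.
by rewrite /si rk_restrict rk_contract (setIidPl sZ) (setIidPl (subset_trans sZ sS)).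
Qed.

Lemma loop_contractE X e : loop (contract M X) e <-> e \in G :\: X /\ r (e |: X) = r X.
Proof.
rewrite /loop /= sub1set cards1; split=> [[eG] | [eG erk]].
  rewrite eG /= => /eqP ne; split=> //.
  by have := rk_setU1 hM X e; have := rk_le_setU1 M X e; lia.
by split=> //; rewrite eG erk /=; apply/eqP; lia.
Qed.

Lemma nonloop_contract X e : e \in G :\: X -> ~ loop (contract M X) e ->
  r (e |: X) = (r X).+1.
Proof.
move=> eG nl; have := rk_setU1 hM X e; have := rk_le_setU1 M X e.
suff : r (e |: X) != r X by lia.
by apply/eqP => erk; apply: nl; apply/loop_contractE.
Qed.

Lemma parallel_contractE X e f : parallel (contract M X) e f <->
  [/\ e \in G :\: X, f \in G :\: X, e != f &
      [/\ r (e |: X) = (r X).+1, r (f |: X) = (r X).+1 & r (e |: (f |: X)) = (r X).+1]].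
Proof.
rewrite /parallel /= !sub1set cards2 !cards1 -setUA.
have ef_le := rk_setU1 hM (f |: X) e; have fe_ge := rk_le_setU1 M (f |: X) e.
split=> [[eG fG nef [/andP [_ /eqP erk] /andP [_ /eqP frk]]] | [eG fG nef [erk frk efrk]]].
  rewrite subUset !sub1set eG fG nef /= => /eqP efrk.
  by split=> //; split; lia.
rewrite subUset !sub1set eG fG nef erk frk /= !eqxx; split=> //; split=> //.
by apply/eqP; lia.
Qed.

Lemma simplification_cover X S e : simplification_set (contract M X) S -> e \in G ->
  [\/ e \in cl M X, e \in S |
      exists2 f, f \in S & e \in cl M (f |: X) /\ f \in cl M (e |: X)].
Proof.
case=> sS _ _ cover eG.
have [eX | eX] := boolP (e \in X).
  by apply: Or31; rewrite in_clE eG (setUidPr _) ?sub1set ?eqxx.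
have [/loop_contractE [_ erk] | nl] := classic (loop (contract M X) e).
  by apply: Or31; rewrite in_clE eG erk eqxx.
have [||eS | [f fS /parallel_contractE [_ fG _ [erk frk efrk]]]] := cover e; rewrite /= ?inE ?eX //.
- by apply: Or32.
apply: Or33; exists f => //; split; rewrite in_clE ?eG; last first.
  by rewrite (subsetP (subsetDl G X)) //= setUCA efrk erk.
by rewrite efrk frk eqxx.
Qed.

End Contraction.

Section Simplification.
Variables (E : finType) (M : matroid E).
Hypothesis hM : is_matroid M.
Local Notation r := (rk M).
Local Notation G := (ground M).
Variables X S : {set E}.
Hypothesis sXG : X \subset G.
Hypothesis hS : simplification_set (contract M X) S.
Implicit Types (F Z : {set E}).

Let sS : S \subset G :\: X. Proof. by case: hS. Qed.

Let sSG : S \subset G. Proof. exact: subset_trans sS (subsetDl _ _). Qed.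

Lemma simplification_span_flat F : flat M F -> X \subset F ->
  F \subset cl M ((S :&: F) :|: X).
Proof.
move=> fF sXF; have sFG := flat_ground fF.
have sSFX : (S :&: F) :|: X \subset G by rewrite subUset sXG (subset_trans (subsetIl _ _)).
apply/subsetP => e eF; have eG := subsetP sFG e eF.
case: (simplification_cover hM hS eG) => [eX | eS | [f fS [efX feX]]].
- by apply: (subsetP (cl_mono hM (subsetUr _ _))).
- by apply: (subsetP (subset_cl sSFX)); rewrite !inE eS eF.
have fF' : f \in F.
  have seXF : e |: X \subset F by rewrite subUset sub1set eF sXF.
  exact: (subsetP (cl_subset_flat hM fF seXF) f feX).
by apply: (subsetP (cl_mono hM _)) efX; apply: setSU; rewrite sub1set inE fS fF'.
Qed.

Lemma simplification_span_coflat F : flat M F -> X \subset F ->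
  G :\: F \subset cl M ((S :\: F) :|: X).
Proof.
move=> fF sXF.
have sSFX : (S :\: F) :|: X \subset G by rewrite subUset sXG (subset_trans (subsetDl _ _)).
apply/subsetP => e /setDP [eG eF].
case: (simplification_cover hM hS eG) => [eX | eS | [f fS [efX feX]]].
- by move: eF; rewrite (subsetP (cl_subset_flat hM fF sXF)).
- by apply: (subsetP (subset_cl sSFX)); rewrite !inE eS eF.
have fnF : f \notin F.
  apply: contra eF => fF'.
  have sfXF : f |: X \subset F by rewrite subUset sub1set fF' sXF.
  exact: (subsetP (cl_subset_flat hM fF sfXF) e efX).
by apply: (subsetP (cl_mono hM _)) efX; apply: setSU; rewrite sub1set inE fS fnF.
Qed.

Lemma rk_simplification : r (S :|: X) = r G.
Proof.
apply/eqP; rewrite eqn_leq rk_mono ?subUset ?sSG ?sXG //=.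
have := simplification_span_flat (flatT M) sXG; rewrite (setIidPl sSG) => /(rk_setU_cl hM) <-.
by apply: rk_mono; apply: subsetUr.
Qed.

Lemma simplification_rk_lower Z : Z \subset S -> r X + minn #|Z| 2 <= r (Z :|: X).
Proof.
case: hS => _ nlS npS _ sZ.
have rk1 e : e \in S -> r (e |: X) = (r X).+1.
  by move=> eS; apply: nonloop_contract (subsetP sS e eS) (nlS e eS).
have [Z2 | ] := leqP 2 #|Z|.
  have [e [f [eZ fZ nef]]] := card_gt1P Z2.
  have eS := subsetP sZ e eZ; have fS := subsetP sZ f fZ.
  have ef_le : r (e |: (f |: X)) <= r (Z :|: X).
    by apply: rk_mono; rewrite setUA; apply: setSU; rewrite subUset !sub1set eZ fZ.
  have ef_ne : r (e |: (f |: X)) != (r X).+1.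
    apply/eqP => efrk; apply: (npS e f eS fS); apply/parallel_contractE => //.
    by split; rewrite ?(subsetP sS) ?rk1.
  have := rk_le_setU1 M (f |: X) e; rewrite rk1 //; lia.
case: (set_0Vmem Z) => [-> _ | [e eZ] Z2]; first by rewrite cards0 set0U addn0.
have -> : Z = [set e] by apply/eqP; rewrite eq_sym eqEcard sub1set eZ cards1.
by rewrite cards1 addn1 rk1 // (subsetP sZ).
Qed.

Lemma si_three_connected_flat F k : three_connected (si (contract M X) S) ->
  flat M F -> X \subset F -> k < 3 ->
  r F + r ((G :\: F) :|: X) < r G + r X + k ->
  r F < r X + k \/ r ((G :\: F) :|: X) < r X + k.
Proof.
move=> h3 fF sXF k3 lt.
set A := S :&: F.
have rkQ Z : Z \subset S -> rk (si (contract M X) S) Z + r X = r (Z :|: X).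
  by move=> sZ; apply: (rk_si_contract hM sS sZ).
have SA : S :\: A = S :\: F by apply/setP => e; rewrite !inE; case: (e \in S); rewrite ?andbF.
have rF : r F = r (A :|: X).
  apply/eqP; rewrite eqn_leq [r (A :|: X) <= _]rk_mono ?subUset ?subsetIr ?sXF // andbT.
  rewrite -(rk_setU_cl hM (simplification_span_flat fF sXF)); exact: rk_mono (subsetUr _ _).
have rcoF : r ((G :\: F) :|: X) = r ((S :\: A) :|: X).
  apply/eqP; rewrite eqn_leq; apply/andP; split.
    rewrite SA -(rk_setU_cl hM (simplification_span_coflat fF sXF)); apply: rk_mono.
    by rewrite subUset subsetUr (subset_trans (subsetUr _ _) (subsetUl _ _)).
  by apply: rk_mono; apply: setSU; rewrite SA; apply: setSD.
have rS : rk (si (contract M X) S) S + r X = r G by rewrite rkQ // rk_simplification.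
have := h3 k A k3; rewrite /k_separation /rank /= subsetIl.
have [kA _ | kA] := ltnP #|A| k.
  by left; rewrite rF; have := rk_setU_card hM A X; lia.
have [kB _ | kB nsep] := ltnP #|S :\: A| k.
  by right; rewrite rcoF; have := rk_setU_card hM (S :\: A) X; lia.
exfalso; apply: nsep; split=> //.
have := rkQ A (subsetIl _ _); have := rkQ (S :\: A) (subsetDl _ _); lia.
Qed.

End Simplification.

Lemma parallel_sym (E : finType) (Q : matroid E) e f : parallel Q e f -> parallel Q f e.
Proof. by case=> eG fG nef [ie i_f ief]; split; rewrite 1?eq_sym // setUC. Qed.

Lemma simplification_set_extend (E : finType) (Q : matroid E) (O : {set E}) :
  O \subset ground Q -> (forall e, e \in O -> ~ loop Q e) ->
  (forall e f, e \in O -> f \in O -> ~ parallel Q e f) ->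
  exists2 S : {set E}, O \subset S & simplification_set Q S.
Proof.
move=> sOG nlO npO.
pose covers (S : {set E}) := forall e, e \in ground Q -> ~ loop Q e ->
  e \in S \/ exists2 f, f \in S & parallel Q e f.
have uncovered S : ~ covers S ->
    exists e, [/\ e \in ground Q :\: S, ~ loop Q e & forall f, f \in S -> ~ parallel Q e f].
  move=> ncover; apply: NNPP => none; apply: ncover => e eG nl.
  have [eS | eS] := boolP (e \in S); [by left | right].
  apply: NNPP => nop; apply: none; exists e; split=> [|//|f fS pef]; first by rewrite inE eS.
  by apply: nop; exists f.
suff grow n S : #|ground Q :\: S| <= n -> O \subset S -> S \subset ground Q ->
    (forall e, e \in S -> ~ loop Q e) -> (forall e f, e \in S -> f \in S -> ~ parallel Q e f) ->
    exists2 T : {set E}, O \subset T & simplification_set Q T.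
  exact: (grow _ O (leqnn _) (subxx O)).
elim: n S => [|n IH] S cS sOS sSG nlS npS;
  (have [cover | /uncovered [e [eGS nl npe]]] := classic (covers S); first by exists S).
  by move: cS; rewrite leqn0 cards_eq0 => /eqP SG; rewrite SG inE in eGS.
have /setDP [eG eS] := eGS.
apply: (IH (e |: S)); rewrite ?subUset ?sub1set ?eG ?sSG ?(subset_trans sOS (subsetUr _ _)) //.
- have -> : ground Q :\: (e |: S) = (ground Q :\: S) :\ e by rewrite setDDl setUC.
  by move: cS; rewrite (cardsD1 e) !inE eS eG add1n ltnS.
- by move=> f; rewrite in_setU1 => /orP [/eqP -> | /nlS].
move=> f g; rewrite !in_setU1 => /orP [/eqP -> | fS] /orP [/eqP -> | gS].
- by case=> _ _; rewrite eqxx.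
- exact: npe.
- by move/parallel_sym; apply: npe.
- exact: npS.
Qed.

Lemma indep_delete (E : finType) (Q : matroid E) (D I : {set E}) :
  indep (delete Q D) I = (I \subset ground Q :\: D) && indep Q I.
Proof. by []. Qed.

Lemma iso_matroid_congr (E E' : finType) (Q Q' : matroid E) (N : matroid E') :
  ground Q = ground Q' -> (forall I : {set E}, I \subset ground Q -> indep Q I = indep Q' I) ->
  iso_matroid Q N -> iso_matroid Q' N.
Proof.
by move=> eG eI [f [finj fG fI]]; exists f; split; rewrite -?eG // => I sI; rewrite -eI ?fI.
Qed.

Section ContractElement.
Variables (E : finType) (M : matroid E).
Hypothesis hM : is_matroid M.
Local Notation r := (rk M).
Local Notation G := (ground M).
Variables (X : {set E}) (x : E).
Hypotheses (xGX : x \in G :\: X) (x_nonloop : r (x |: X) = (r X).+1).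
Implicit Types (S : {set E}).

Lemma simplification_set_contract_setU1 S2 :
  simplification_set (contract M (x |: X)) S2 ->
  exists2 S1 : {set E}, x |: S2 \subset S1 & simplification_set (contract M X) S1.
Proof.
case=> sS2 nlS2 npS2 _.
have sS2X : G :\: (x |: X) \subset G :\: X by apply: setDS; apply: subsetUr.
have rk1 f : f \in S2 -> r (f |: (x |: X)) = (r (x |: X)).+1.
  by move=> fS; apply: nonloop_contract (subsetP sS2 f fS) (nlS2 f fS).
have npx f : f \in S2 -> ~ parallel (contract M X) x f.
  move=> fS /(parallel_contractE hM) [_ _ _ [xrk _ xfrk]].
  by have := rk1 f fS; rewrite setUCA xfrk xrk; lia.
apply: simplification_set_extend.
- by rewrite subUset sub1set xGX (subset_trans sS2 sS2X).
- move=> e; rewrite in_setU1 => /orP [/eqP -> | eS] /(loop_contractE hM) [_ erk].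
    by move: x_nonloop; rewrite erk; lia.
  have := rk1 e eS; rewrite (rk_setU1_mono hM (subsetUr [set x] X) erk); lia.
move=> e f; rewrite !in_setU1 => /orP [/eqP -> | eS] /orP [/eqP -> | fS].
- by case=> _ _; rewrite eqxx.
- exact: npx.
- by move/parallel_sym; apply: npx.
move=> /(parallel_contractE hM) [_ _ nef [_ frk efrk]]; apply: (npS2 e f eS fS).
have efx : r (e |: (f |: (x |: X))) = r (f |: (x |: X)).
  apply: (rk_setU1_mono hM (setUS [set f] (subsetUr [set x] X))); lia.
by apply/(parallel_contractE hM); split; rewrite ?(subsetP sS2) ?efx ?rk1.
Qed.

Lemma indep_contract_si_setU1 S1 S2 (C I : {set E}) :
  S1 \subset G :\: X -> x |: S2 \subset S1 -> S2 \subset G :\: (x |: X) ->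
  C \subset S2 -> I \subset S2 :\: C ->
  indep (contract (si (contract M X) S1) (x |: C)) I =
  indep (contract (si (contract M (x |: X)) S2) C) I.
Proof.
move=> sS1 sxS21 sS2 sC sIC.
have xS1 : x \in S1 by rewrite (subsetP sxS21) ?setU11.
have sS21 : S2 \subset S1 by apply: subset_trans sxS21; apply: subsetUr.
have xS2 : x \notin S2 by apply/negP => /(subsetP sS2); rewrite !inE eqxx.
have sI1 : I \subset S1 :\: (x |: C).
  apply/subsetP => y yI; have /setDP [yS2 yC] := subsetP sIC y yI.
  rewrite !inE (subsetP sS21 y yS2) (negbTE yC) orbF andbT.
  by apply: contraNneq xS2 => <-.
have sxC : x |: C \subset S1 by rewrite subUset sub1set xS1 (subset_trans sC).
have sIC2 : I :|: C \subset S2 by rewrite subUset sC (subset_trans sIC (subsetDl _ _)).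
have sIxC1 : I :|: (x |: C) \subset S1 by rewrite subUset sxC (subset_trans sI1 (subsetDl _ _)).
have eIC : I :|: (x |: C) :|: X = I :|: C :|: (x |: X) by rewrite setUCA -setUA setUCA.
have eC : x |: C :|: X = C :|: (x |: X) by rewrite -setUA setUCA.
rewrite /= sIC sI1 /=.
have := rk_si_contract hM sS2 sIC2; have := rk_si_contract hM sS2 sC.
have := rk_si_contract hM sS1 sIxC1; have := rk_si_contract hM sS1 sxC.
rewrite eIC eC => rC1 rIC1 rC2 rIC2.
have -> : rk (si (contract M X) S1) (I :|: (x |: C)) =
          (rk (si (contract M (x |: X)) S2) (I :|: C)).+1.
  by move: rIC1 rIC2 x_nonloop; clear; lia.
have -> : rk (si (contract M X) S1) (x |: C) = (rk (si (contract M (x |: X)) S2) C).+1.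
  by move: rC1 rC2 x_nonloop; clear; lia.
by rewrite addnS eqSS.
Qed.

Lemma has_minor_si_contract_setU1 (E' : finType) (N : matroid E') S1 S2 :
  S1 \subset G :\: X -> x |: S2 \subset S1 -> S2 \subset G :\: (x |: X) ->
  has_minor (si (contract M (x |: X)) S2) N -> has_minor (si (contract M X) S1) N.
Proof.
move=> sS1 sxS21 sS2 [C [D [/= sC sD dCD iso]]].
have xS1 : x \in S1 by rewrite (subsetP sxS21) ?setU11.
have sS21 : S2 \subset S1 by apply: subset_trans sxS21; apply: subsetUr.
have xS2 : x \notin S2 by apply/negP => /(subsetP sS2); rewrite !inE eqxx.
(* Contracting x in si(M/X) reproduces si(M/(x+X)) on S2; the other elements of S1 are deleted. *)
exists (x |: C), (D :|: (S1 :\: (x |: S2))); split=> /=.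
- by rewrite subUset sub1set xS1 (subset_trans sC).
- by rewrite subUset (subset_trans sD) // subsetDl.
- rewrite -setI_eq0; apply/eqP/setP => y; rewrite !inE.
  have [-> | yx] /= := eqVneq y x.
    by rewrite orbF; apply/negP => /(subsetP sD); rewrite (negbTE xS2).
  case yC : (y \in C) => //=.
  by rewrite (disjointFr dCD yC) (subsetP sC y yC).
have eG : S1 :\: (x |: C) :\: (D :|: (S1 :\: (x |: S2))) = S2 :\: C :\: D.
  apply/setP => y; rewrite !inE.
  have [-> | yx] /= := eqVneq y x; first by rewrite (negbTE xS2) !andbF.
  case yS2 : (y \in S2) => /=; first by rewrite (subsetP sS21 y yS2) orbF !andbT.
  by case: (y \in S1); rewrite ?orbT ?andbF.
apply: iso_matroid_congr iso => [|I sI]; first by rewrite /= eG.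
have sIC : I \subset S2 :\: C by apply: subset_trans sI (subsetDl _ _).
rewrite !indep_delete (indep_contract_si_setU1 sS1 sxS21 sS2 sC sIC).
by congr (_ && _); rewrite /= eG.
Qed.

End ContractElement.

Lemma k_separationC (E : finType) (Q : matroid E) k X :
  k_separation Q k X -> k_separation Q k (ground Q :\: X).
Proof.
case=> sX kX kY lt.
have eX : ground Q :\: (ground Q :\: X) = X by rewrite setDDr setDv set0U; apply/setIidPr.
by split; rewrite ?eX ?subsetDl // addnC.
Qed.

Lemma not_three_connected_separation (E : finType) (Q : matroid E) x :
  ~ three_connected Q -> exists k X, [/\ k < 3, k_separation Q k X & x \notin X].
Proof.
move=> n3; have [k [X [k3 sep]]] : exists k X, k < 3 /\ k_separation Q k X.
  by apply: NNPP => none; apply: n3 => k X k3 sep; apply: none; exists k, X.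
have [xX | xX] := boolP (x \in X); last by exists k, X.
by exists k, (ground Q :\: X); split; rewrite ?inE ?xX //; apply: k_separationC.
Qed.

Lemma three_connected_rk (E : finType) (M : matroid E) (W : {set E}) :
  is_matroid M -> three_connected M -> W \subset ground M -> rk M W < rk M (ground M) ->
  rk M (ground M) + minn #|W| 2 <= rk M W + rk M (ground M :\: W).
Proof.
move=> hM h3 sWG ltW; set Z := ground M :\: W.
have nsep k : k < 3 -> k <= #|W| -> k <= #|Z| -> rk M (ground M) + k <= rk M W + rk M Z.
  by move=> k3 kW kZ; rewrite leqNgt; apply/negP => lt; apply: (h3 k W k3).
have Z1 : 0 < #|Z|.
  have [/eqP | [e eZ]] := set_0Vmem Z; last by rewrite card_gt0; apply/set0Pn; exists e.
  by rewrite setD_eq0 => /(rk_mono M); lia.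
have [W2 | W1] := leqP 2 #|W|.
  have [Z2 | Z1'] := leqP 2 #|Z|; first exact: nsep.
  by have := nsep 1 isT (ltnW W2) Z1; have := rk_le_card M Z; lia.
have [W0 | W0] := posnP #|W|.
  by move/eqP: W0; rewrite cards_eq0 => /eqP W0; rewrite /Z W0 setD0 cards0; lia.
by apply: nsep => //; lia.
Qed.

Section Simple.
Variables (E : finType) (M : matroid E).
Hypotheses (hM : is_matroid M) (hsim : simple M).
Local Notation r := (rk M).
Local Notation G := (ground M).

Lemma simple_indep1 e : e \in G -> indep M [set e].
Proof. by move=> eG; apply/negPn/negP => nie; case: hsim => nl _; apply: (nl e). Qed.

Lemma simple_rk1 e : e \in G -> r [set e] = 1.
Proof. by move=> eG; have := simple_indep1 eG; rewrite indep_rkE // cards1 => /eqP. Qed.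

Lemma simple_rk2 e f : e \in G -> f \in G -> e != f -> r [set e; f] = 2.
Proof.
move=> eG fG nef; have [ief | nief] := boolP (indep M [set e; f]).
  by move: ief; rewrite indep_rkE // cards2 nef => /eqP.
by case: hsim => _ np; case: (np e f); split=> //; split; rewrite ?simple_indep1.
Qed.

End Simple.

Section Vertbarrier.
Variables (E : finType) (M : matroid E).
Hypotheses (hM : is_matroid M) (hsim : simple M) (h3 : three_connected M).
Local Notation r := (rk M).
Local Notation G := (ground M).
Variables (x p : E) (S2 W : {set E}).
Hypotheses (xG : x \in G) (pG : p \in G) (xp : x != p).
Hypotheses (hS2 : simplification_set (contract M [set x; p]) S2)
           (h3S2 : three_connected (si (contract M [set x; p]) S2)).
Hypotheses (fW : flat M W) (pW : p \in W) (rW3 : 3 <= r W) (rWG : r W < r G)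
           (rW_sep : r W + r ((G :\: W) :|: [set x; p]) <= r G + 2).

Let sX2G : [set x; p] \subset G. Proof. by rewrite subUset !sub1set xG pG. Qed.
Let rX2 : r [set x; p] = 2. Proof. exact: simple_rk2. Qed.

Lemma vertbarrier_x_notin : x \notin W.
Proof.
apply/negP => xW; have sX2W : [set x; p] \subset W by rewrite subUset !sub1set xW pW.
have sep : r W + r ((G :\: W) :|: [set x; p]) < r G + r [set x; p] + 1 by rewrite rX2; lia.
have [lt | lt] := si_three_connected_flat hM sX2G hS2 h3S2 fW sX2W (isT : 1 < 3) sep.
  by move: lt; rewrite rX2; lia.
have := flat_full hM fW sX2W; rewrite rX2 in lt * => /(_ (ltnSE lt)) /(rk_mono M); lia.
Qed.

Lemma vertbarrier_hyperplane : r G = (r W).+1.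
Proof.
have sxWG : x |: W \subset G by rewrite subUset sub1set xG flat_ground.
have fF := flat_cl hM sxWG; set F := cl M (x |: W) in fF *.
have rF : r F = (r W).+1 by rewrite /F rk_cl // rk_notin_flat // vertbarrier_x_notin.
have sxWF : x |: W \subset F := subset_cl sxWG.
have sX2F : [set x; p] \subset F.
  by apply: subset_trans sxWF; rewrite setUS // sub1set.
have coF : r ((G :\: F) :|: [set x; p]) <= r ((G :\: W) :|: [set x; p]).
  by apply: rk_mono; apply: setSU; apply: setDS; apply: subset_trans sxWF; apply: subsetUr.
suff : r G <= r F by lia.
have sep2 : r F + r ((G :\: F) :|: [set x; p]) < r G + r [set x; p] + 2 by rewrite rX2; lia.
have [lt | co3] := si_three_connected_flat hM sX2G hS2 h3S2 fF sX2F (isT : 2 < 3) sep2.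
  by move: lt; rewrite rX2; lia.
have [le | lt1] := leqP (r G + 3) (r F + r ((G :\: F) :|: [set x; p])).
  by move: co3; rewrite rX2; lia.
have sep1 : r F + r ((G :\: F) :|: [set x; p]) < r G + r [set x; p] + 1 by rewrite rX2; lia.
have [lt | co2] := si_three_connected_flat hM sX2G hS2 h3S2 fF sX2F (isT : 1 < 3) sep1.
  by move: lt; rewrite rX2; lia.
have := flat_full hM fF sX2F; rewrite rX2 in co2 * => /(_ (ltnSE co2)); exact: rk_mono.
Qed.

Lemma vertbarrier_rk_setD : r (G :\: W) = 3 /\ r (p |: (G :\: W)) = 3.
Proof.
have := three_connected_rk hM h3 (flat_ground fW) rWG; have := rk_le_card M W.
have : r (p |: (G :\: W)) <= r ((G :\: W) :|: [set x; p]).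
  by apply: rk_mono; rewrite subUset subsetUl !sub1set !inE eqxx !orbT.
have := rk_le_setU1 M (G :\: W) p; have := vertbarrier_hyperplane.
by move: rW_sep rW3; clear; lia.
Qed.

Lemma vertbarrier_setD (E' : finType) (N : matroid E') :
  vert_N_contractible M N [set x; p] ->
  4 <= rank M /\ exists2 Cs : {set E}, vertbarrier M N Cs p & x \in Cs.
Proof.
move=> hv; have rG := vertbarrier_hyperplane; have [rZ rpZ] := vertbarrier_rk_setD.
have xZ : x \in G :\: W by rewrite inE vertbarrier_x_notin.
split; first by rewrite /rank rG; lia.
exists (G :\: W) => //; split=> //; last by exists x.
- exact: cocircuit_setD_hyperplane.
by rewrite !inE pW pG rpZ rZ eqxx.
Qed.

End Vertbarrier.

Section SeparationFlat.
Variables (E : finType) (M : matroid E).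
Hypotheses (hM : is_matroid M) (hsim : simple M) (h3 : three_connected M).
Local Notation r := (rk M).
Local Notation G := (ground M).
Variables (x p : E) (T : {set E}).
Hypotheses (pG : p \in G) (hT : simplification_set (contract M [set p]) T).

Lemma separation_flat k X : k < 3 -> k_separation (si (contract M [set p]) T) k X ->
  x \in T :\: X ->
  exists W, [/\ flat M W, p \in W, 3 <= r W, r W < r G &
                r W + r ((G :\: W) :|: [set x; p]) <= r G + 2].
Proof.
move=> k3 [/= sX kX kY lt] /setDP [xT xX].
have sPG : [set p] \subset G by rewrite sub1set.
have sT : T \subset G :\: [set p] by case: hT.
have rP : r [set p] = 1 := simple_rk1 hM hsim pG.
have rkQ (Z : {set E}) : Z \subset T -> rk (si (contract M [set p]) T) Z + 1 = r (Z :|: [set p]).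
  by move=> sZ; rewrite -rP; apply: (rk_si_contract hM sT sZ).
have := rkQ X sX; have := rkQ _ (subsetDl T X); have := rkQ T (subxx T).
rewrite rk_simplification // => rT rY rX.
have sep : r (X :|: [set p]) + r ((T :\: X) :|: [set p]) < r G + 1 + k.
  by rewrite /rank /= in lt; move: lt rT rY rX; clear; lia.
have lowX := simplification_rk_lower hM sPG hT sX.
have lowY := simplification_rk_lower hM sPG hT (subsetDl T X).
have sXPG : X :|: [set p] \subset G by rewrite subUset sPG (subset_trans sX) // (subset_trans sT) ?subsetDl.
have fW := flat_cl hM sXPG; set W := cl M (X :|: [set p]) in fW *.
have rW : r W = r (X :|: [set p]) by rewrite /W rk_cl.
have sXPW : X :|: [set p] \subset W := subset_cl sXPG.
have pW : p \in W by rewrite (subsetP sXPW) // !inE eqxx orbT.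
have coW : r ((G :\: W) :|: [set x; p]) <= r ((T :\: X) :|: [set p]).
  have sPW : [set p] \subset W by rewrite sub1set.
  have span := simplification_span_coflat hM sPG hT fW sPW.
  have sTW : (T :\: W) :|: [set p] \subset (T :\: X) :|: [set p].
    by apply: setSU; apply: setDS; apply: subset_trans sXPW; apply: subsetUl.
  rewrite -(rk_setU_cl hM (subset_trans span (cl_mono hM sTW))); apply: rk_mono.
  by rewrite !subUset subsetUr !sub1set !inE xT xX eqxx !orbT.
have rWG : r W < r G by move: sep rW lowY kY k3 rP; clear; lia.
(* [k <= 1] is impossible: it would give a 1- or 2-separation of M, as #|W| >= r W >= 1 + k. *)
have := three_connected_rk hM h3 (flat_ground fW) rWG; have := rk_le_card M W.
have : r (G :\: W) <= r ((G :\: W) :|: [set x; p]) by apply: rk_mono; apply: subsetUl.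
move=> coWW cardW conn; exists W; split=> //; move: sep rW lowX coW coWW cardW conn kX k3 rP; clear; lia.
Qed.

End SeparationFlat.

Theorem lemma5p1 (E E' : finType) (M : matroid E) (N : matroid E') (x p : E) :
  is_matroid M -> simple M -> three_connected M ->
  is_matroid N -> simple N -> three_connected N ->
  has_minor M N ->
  x \in ground M -> p \in ground M ->
  vert_N_contractible M N [set x; p] ->
  ~ vert_N_contractible M N [set p] ->
  4 <= rank M /\ exists2 Cs : {set E}, vertbarrier M N Cs p & x \in Cs.
Proof.
move=> hM hsim h3 _ _ _ _ xG pG hv hnot.
have xp : x != p by apply/eqP => xp; apply: hnot; rewrite -(setUid [set p]) -{1}xp.
have [S2 [hS2 h3S2 minorS2]] := hv.
have xGP : x \in ground M :\: [set p] by rewrite !inE xp xG.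
have x_nonloop : rk M (x |: [set p]) = (rk M [set p]).+1.
  by rewrite simple_rk2 ?simple_rk1.
have [T sxS2T hT] := simplification_set_contract_setU1 hM xGP x_nonloop hS2.
have minorT : has_minor (si (contract M [set p]) T) N.
  by apply: has_minor_si_contract_setU1 minorS2; case: hT; case: hS2.
have [k [X [k3 sep xX]]] : exists k X, [/\ k < 3, k_separation (si (contract M [set p]) T) k X
                                         & x \notin X].
  by apply: not_three_connected_separation => h3T; apply: hnot; exists T.
have xTX : x \in T :\: X by rewrite inE xX (subsetP sxS2T) ?setU11.
have [W [fW pW rW3 rWG rW_sep]] := separation_flat hM hsim h3 pG hT k3 sep xTX.
exact: (vertbarrier_setD hM hsim h3 xG pG xp hS2 h3S2 fW pW rW3 rWG rW_sep hv).
Qed.
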